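(* Let $G\in\mathrm{C}^1(\mathbb{R})$ be coercive and $V\in\mathrm{Lip}(\mathbb{R})$ be $1$-periodic. For all $\theta_1,\theta_2\in\mathbb{R}$ with $\theta_1<\theta_2$, we have $f_{\theta_1}(x)<f_{\theta_2}(x)$ for all $x\in\mathbb{R}$.
   Context: $G$ coercive means $G(p)\to\infty$ as $p\to\pm\infty$. For each $\theta\in\mathbb{R}$, $f_\theta\in\mathrm{C}^1(\mathbb{R})$ denotes the unique $1$-periodic function such that $\int_0^1 f_\theta(x)dx=\theta$ and, for some (unique) constant $\overline{H}(\theta)\in\mathbb{R}$, $f_\theta'(x)+G(f_\theta(x))+V(x)=\overline{H}(\theta)$ for all $x\in\mathbb{R}$. *)

From Stdlib Require Import Reals.
From Coquelicot Require Import Coquelicot.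
Open Scope R_scope.

Definition is_C1 (f : R -> R) : Prop :=
  forall x, ex_derive f x /\ continuous (Derive f) x.

Definition coercive (G : R -> R) : Prop :=
  filterlim G (Rbar_locally p_infty) (Rbar_locally p_infty) /\
  filterlim G (Rbar_locally m_infty) (Rbar_locally p_infty).

Definition lipschitz (V : R -> R) : Prop :=
  exists L : R, forall x y, Rabs (V x - V y) <= L * Rabs (x - y).

Definition periodic1 (f : R -> R) : Prop := forall x, f (x + 1) = f x.

Definition is_f_theta (G V : R -> R) (theta : R) (f : R -> R) : Prop :=
  is_C1 f /\ periodic1 f /\ RInt f 0 1 = theta /\
  exists Hbar : R, forall x, Derive f x + G (f x) + V x = Hbar.

From Stdlib Require Import Reals Lra Classical.
From Coquelicot Require Import Coquelicot.
Open Scope R_scope.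

(* The gap w = f2 - f1 solves w' = (H2 - H1) - (G f2 - G f1), and since G is
   locally Lipschitz, |G f2 - G f1| <= L |w| on every bounded interval.  If
   H2 <= H1 and w <= 0 at one point, a Gronwall argument keeps w <= 0 to the
   right of it, hence everywhere by periodicity, contradicting theta1 < theta2.
   So H1 < H2; as w >= 0 somewhere, the same argument with the roles swapped
   gives w >= 0 everywhere, and a zero of w would be a minimum where
   w' = H2 - H1 > 0. *)

Lemma sqr_pos_part_expansion y h :
  Rabs (Rmax (y + h) 0 ^ 2 - Rmax y 0 ^ 2 - 2 * Rmax y 0 * h) <= h ^ 2.
Proof.
apply Rabs_le; unfold Rmax;
  destruct (Rle_dec (y + h) 0), (Rle_dec y 0); split; nra.
Qed.

Lemma is_derive_sqr_pos_part y : is_derive (fun t => Rmax t 0 ^ 2) y (2 * Rmax y 0).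
Proof.
apply is_derive_Reals; intros eps Heps; exists (mkposreal eps Heps); intros h Hh0 Hh; simpl in Hh.
replace ((Rmax (y + h) 0 ^ 2 - Rmax y 0 ^ 2) / h - 2 * Rmax y 0)
  with ((Rmax (y + h) 0 ^ 2 - Rmax y 0 ^ 2 - 2 * Rmax y 0 * h) / h) by (field; auto).
rewrite Rabs_div by auto.
apply Rle_lt_trans with (Rabs h); [|auto].
apply Rmult_le_reg_r with (Rabs h); [now apply Rabs_pos_lt|].
unfold Rdiv; rewrite Rmult_assoc, Rinv_l by (now apply Rabs_no_R0).
rewrite Rmult_1_r, <- Rabs_mult, (Rabs_pos_eq (h * h)) by nra.
replace (h * h) with (h ^ 2) by ring. apply sqr_pos_part_expansion.
Qed.

Lemma gronwall_nonpos (w dw : R -> R) (L a b : R) :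
  (forall x, is_derive w x (dw x)) -> w a <= 0 ->
  (forall x, a <= x <= b -> 0 < w x -> dw x <= L * w x) ->
  forall x, a <= x <= b -> w x <= 0.
Proof.
intros w_dw wa_le0 dw_le x Hx.
(* (w+)^2 e^(-2Lt) is differentiable, vanishes at a and does not increase. *)
set (p := fun t => Rmax (w t) 0).
set (e := fun t => exp (- (2 * L) * t)).
set (phi := fun t => p t ^ 2 * e t).
set (dphi := fun t => 2 * p t * e t * (dw t - L * p t)).
assert (phi_dphi : forall t, is_derive phi t (dphi t)).
{ intro t.
  assert (p2_d : is_derive (fun t => p t ^ 2) t (dw t * (2 * p t))).
  { apply (is_derive_comp (fun y => Rmax y 0 ^ 2) w); [apply is_derive_sqr_pos_part|apply w_dw]. }
  assert (e_d : is_derive e t (- (2 * L) * e t)) by (unfold e; auto_derive; [auto|ring]).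
  replace (dphi t) with (dw t * (2 * p t) * e t + p t ^ 2 * (- (2 * L) * e t))
    by (unfold dphi; ring).
  exact (is_derive_mult _ _ _ _ _ p2_d e_d Rmult_comm). }
assert (dphi_le0 : forall t, a <= t <= b -> dphi t <= 0).
{ intros t Ht. unfold dphi, p, e. pose proof (exp_pos (- (2 * L) * t)).
  destruct (Rlt_or_le 0 (w t)) as [wt_pos|wt_le0].
  - rewrite Rmax_left by lra. specialize (dw_le t Ht wt_pos).
    assert (0 < w t * exp (- (2 * L) * t)) by (apply Rmult_lt_0_compat; auto). nra.
  - rewrite Rmax_right by lra. lra. }
destruct (MVT_gen phi a x dphi) as [c [Hc phi_mvt]].
- intros t _. apply phi_dphi.
- intros t _. apply continuity_pt_filterlim, (ex_derive_continuous phi).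
  eexists; apply phi_dphi.
- rewrite Rmin_left, Rmax_right in Hc by lra.
  assert (phi_a : phi a = 0) by (unfold phi, p; rewrite Rmax_right by lra; ring).
  assert (phi_x : phi x <= 0) by (pose proof (dphi_le0 c ltac:(lra)); nra).
  apply Rnot_lt_le; intro wx_pos.
  unfold phi, p, e in phi_x; rewrite Rmax_left in phi_x by lra.
  pose proof (pow_lt _ 2 wx_pos); pose proof (exp_pos (- (2 * L) * x)); nra.
Qed.

Lemma periodic1_IZR (f : R -> R) : periodic1 f -> forall k x, f (x + IZR k) = f x.
Proof.
intros f_per k; induction k as [|k IHk|k IHk] using Z.peano_ind; intro x.
- now rewrite Rplus_0_r.
- now rewrite succ_IZR, <- Rplus_assoc, f_per.
- rewrite <- Z.sub_1_r, minus_IZR.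
  replace (x + (IZR k - 1)) with (x - 1 + IZR k) by ring.
  rewrite IHk, <- f_per. f_equal; ring.
Qed.

Lemma is_C1_continuous (f : R -> R) : is_C1 f -> forall x, continuous f x.
Proof. intros f_C1 x. apply (ex_derive_continuous f), f_C1. Qed.

Lemma continuous_bounded_segment (f : R -> R) (a b : R) :
  a <= b -> (forall t, a <= t <= b -> continuous f t) ->
  exists B, forall t, a <= t <= b -> Rabs (f t) <= B.
Proof.
intros ab f_cont.
destruct (continuity_ab_maj (fun t => Rabs (f t)) a b ab) as [M [HM _]].
- intros t Ht. apply continuity_pt_filterlim.
  apply (continuous_comp f Rabs); [now apply f_cont|apply continuous_Rabs].
- now exists (Rabs (f M)).
Qed.

Lemma C1_lipschitz_on_bounded (G : R -> R) : is_C1 G -> forall B, exists L,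
  forall u v, Rabs u <= B -> Rabs v <= B -> Rabs (G u - G v) <= L * Rabs (u - v).
Proof.
intros G_C1 B.
destruct (continuous_bounded_segment (Derive G) (- Rabs B) (Rabs B)) as [L HL].
- pose proof (Rabs_pos B); lra.
- intros t _. apply G_C1.
- exists L. intros u v Hu Hv.
  destruct (MVT_gen G v u (Derive G)) as [c [Hc G_mvt]].
  + intros t _. apply Derive_correct, G_C1.
  + intros t _. apply continuity_pt_filterlim, is_C1_continuous, G_C1.
  + rewrite G_mvt, Rabs_mult. apply Rmult_le_compat_r; [apply Rabs_pos|].
    apply HL. pose proof (RRle_abs B).
    apply Rabs_le_between in Hu; apply Rabs_le_between in Hv.
    split; [apply Rle_trans with (Rmin v u)|apply Rle_trans with (Rmax v u)];
      try apply Hc; [apply Rmin_glb|apply Rmax_lub]; lra.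
Qed.

Lemma is_derive_min_eq_0 (h : R -> R) (x l : R) :
  is_derive h x l -> (forall y, h x <= h y) -> l = 0.
Proof.
intros h_l h_min.
pose (pr := exist _ l (proj1 (is_derive_Reals h x l) h_l) : derivable_pt h x).
change l with (derive_pt h x pr).
apply (deriv_minimum h (x - 1) (x + 1)); [lra|lra|auto].
Qed.

Lemma RInt_le_continuous (f g : R -> R) (a b : R) : a <= b ->
  (forall x, continuous f x) -> (forall x, continuous g x) ->
  (forall x, f x <= g x) -> RInt f a b <= RInt g a b.
Proof.
intros ab f_cont g_cont fg.
apply RInt_le; auto; apply (ex_RInt_continuous (V := R_CompleteNormedModule)); auto.
Qed.

Section Comparison.

Variables (G V f g : R -> R) (Hf Hg : R).
Hypotheses (G_C1 : is_C1 G) (f_C1 : is_C1 f) (g_C1 : is_C1 g)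
  (f_sol : forall x, Derive f x + G (f x) + V x = Hf)
  (g_sol : forall x, Derive g x + G (g x) + V x = Hg).

Lemma is_derive_solution_gap x :
  is_derive (fun t => g t - f t) x (Hg - Hf - (G (g x) - G (f x))).
Proof.
replace (Hg - Hf - (G (g x) - G (f x))) with (Derive g x - Derive f x)
  by (rewrite <- (f_sol x), <- (g_sol x); ring).
apply (is_derive_minus g f); apply Derive_correct; [apply g_C1|apply f_C1].
Qed.

Lemma solution_gap_lipschitz a b : a <= b -> exists L, forall t, a <= t <= b ->
  Rabs (G (g t) - G (f t)) <= L * Rabs (g t - f t).
Proof.
intros ab.
destruct (continuous_bounded_segment f a b ab) as [Bf HBf];
  [intros; now apply is_C1_continuous|].
destruct (continuous_bounded_segment g a b ab) as [Bg HBg];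
  [intros; now apply is_C1_continuous|].
destruct (C1_lipschitz_on_bounded G G_C1 (Rmax Bf Bg)) as [L HL].
exists L; intros t Ht; apply HL.
- apply Rle_trans with Bg; [now apply HBg|apply Rmax_r].
- apply Rle_trans with Bf; [now apply HBf|apply Rmax_l].
Qed.

Lemma solution_le_forward : Hg <= Hf ->
  forall a, g a <= f a -> forall x, a <= x -> g x <= f x.
Proof.
intros Hgf a ga x ax.
destruct (solution_gap_lipschitz a x ax) as [L HL].
enough (g x - f x <= 0) by lra.
apply (gronwall_nonpos (fun t => g t - f t) (fun t => Hg - Hf - (G (g t) - G (f t))) L a x);
  [apply is_derive_solution_gap|lra| |lra].
intros t Ht gap_pos. specialize (HL t Ht).
rewrite (Rabs_pos_eq (g t - f t)) in HL by lra.
apply Rabs_le_between in HL. lra.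
Qed.

Lemma solution_lt_of_le : Hf < Hg -> (forall x, f x <= g x) -> forall x, f x < g x.
Proof.
intros Hfg fg x. apply Rnot_le_lt; intro gx_le.
assert (touch : g x = f x) by (specialize (fg x); lra).
assert (Hg - Hf - (G (g x) - G (f x)) = 0); [|rewrite touch in *; lra].
apply (is_derive_min_eq_0 (fun t => g t - f t) x); [apply is_derive_solution_gap|].
intros y; specialize (fg y); simpl; lra.
Qed.

Hypotheses (f_per : periodic1 f) (g_per : periodic1 g).

Lemma solution_le_periodic : Hg <= Hf -> forall a, g a <= f a -> forall x, g x <= f x.
Proof.
intros Hgf a ga x.
rewrite <- (periodic1_IZR f f_per (up (a - x)) x), <- (periodic1_IZR g g_per (up (a - x)) x).
apply solution_le_forward with a; auto.
destruct (archimed (a - x)); lra.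
Qed.

End Comparison.

Theorem lemma4p3 (G V : R -> R) :
  is_C1 G -> coercive G -> lipschitz V -> periodic1 V ->
  forall (theta1 theta2 : R) (f1 f2 : R -> R),
    theta1 < theta2 ->
    is_f_theta G V theta1 f1 -> is_f_theta G V theta2 f2 ->
    forall x : R, f1 x < f2 x.
Proof.
intros G_C1 _ _ _ theta1 theta2 f1 f2 theta12
  [f1_C1 [f1_per [f1_mean [H1 f1_sol]]]] [f2_C1 [f2_per [f2_mean [H2 f2_sol]]]].
assert (not_le21 : ~ (forall x, f2 x <= f1 x)).
{ intro le21.
  assert (RInt f2 0 1 <= RInt f1 0 1)
    by (apply RInt_le_continuous; auto; [lra| |]; now apply is_C1_continuous).
  lra. }
destruct (Rle_lt_dec H2 H1) as [H21|H12].
- intro x; apply Rnot_le_lt; intro le21_x.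
  apply not_le21, (solution_le_periodic G V f1 f2 H1 H2) with x; auto.
- destruct (not_all_not_ex _ (fun y => f1 y <= f2 y)) as [y le12_y].
  { intro no_le12; apply not_le21; intro x.
    specialize (no_le12 x); lra. }
  apply (solution_lt_of_le G V f1 f2 H1 H2); auto.
  intro x; apply (solution_le_periodic G V f2 f1 H2 H1) with y; auto; lra.
Qed.
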